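(* Let $0<a<1$. Then, as $t\to-\infty$, $$f(t,a)\sim-\frac{1}{\ln(-t/a)+\ln\bigl(\ln(-t/a)-1\bigr)},$$ where $f(t,a)=t\int_0^1(ax)^{-tx}\,dx$. In particular $f(t,a)\to0$ inverse-logarithmically as $t\to-\infty$.
   Context: For real $a>0$ and real $t$, $f(t,a)=t\int_0^1 (ax)^{-tx}\,dx$, where $(ax)^{-tx}=\exp(-tx\ln(ax))$ for $x\in(0,1]$. The notation $g\sim h$ means $g/h\to1$. *)

From Stdlib Require Import Reals.
From Coquelicot Require Import Coquelicot.
Open Scope R_scope.

(* (a x)^(-t x) := exp(-t x ln(a x)) for x in (0,1].  At x = 0 Stdlib's total
   [ln] gives ln 0 = 0, so the integrand equals 1 there, which is its limit;
   in any case a single point does not affect the Riemann integral. *)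
Definition integrand (t a x : R) : R := exp (- t * x * ln (a * x)).

Definition fta (t a : R) : R := t * RInt (fun x => integrand t a x) 0 1.

Definition gta (t a : R) : R := - / (ln (- t / a) + ln (ln (- t / a) - 1)).

From Stdlib Require Import Reals Lra.
From Coquelicot Require Import Coquelicot.
Open Scope R_scope.

(* Write s = -t, u = ln s and c = -ln a > 0.  Then f/g = s I M with
   I = \int_0^1 exp (s x ln (a x)) dx and M = u + c + ln (u + c - 1) ~ u, so it
   suffices to show s I ~ 1/u.  Freezing ln (a x) at the end of an interval on
   which it is monotone bounds the integrand by exp (-k x), which integrates
   explicitly.  Below, cut at eta = 1/(s u^2): on [eta, 1], ln (a x) >= ln (a eta)
   = -(c + u + 2 ln u), whence s I >= (1 + o(1))/u.  Above, cut at delta = u^2/s: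
   on [0, delta], ln (a x) <= ln (a delta) = -(c + u - 2 ln u), and on [delta, 1],
   ln (a x) <= ln a = -c, whose contribution is O(exp (-c u^2)/s); hence
   s I <= (1 + o(1))/u. *)

Lemma exp_le_compat x y : x <= y -> exp x <= exp y.
Proof.
  intros [hlt | ->]; [now left; apply exp_increasing | now right].
Qed.

Lemma lt_exp y : y < exp y.
Proof. pose proof (exp_ineq1_le y); lra. Qed.

Lemma ln_lt_id y : 0 < y -> ln y < y.
Proof. intros hy. rewrite <- (ln_exp y) at 2. apply ln_increasing; [lra | apply lt_exp]. Qed.

Lemma exp_opp_le_inv y : 0 < y -> exp (- y) <= / y.
Proof.
  intros hy. rewrite exp_Ropp. apply Rinv_le_contravar; [lra | left; apply lt_exp].
Qed.

(* [exp (u/2) >= e u/2 >= u], from the tangent line of [exp] at [1]. *)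
Lemma sqr_le_exp u : 0 <= u -> u * u <= exp u.
Proof.
  intros hu.
  assert (he : 2 <= exp 1) by (pose proof (exp_ineq1_le 1); lra).
  assert (hhalf : u <= exp (u / 2)).
  { pose proof (exp_ineq1_le (u / 2 - 1)) as h.
    replace (exp (u / 2)) with (exp 1 * exp (u / 2 - 1))
      by (rewrite <- exp_plus; f_equal; ring).
    nra. }
  replace (exp u) with (exp (u / 2) * exp (u / 2))
    by (rewrite <- exp_plus; f_equal; field).
  apply Rmult_le_compat; lra.
Qed.

Lemma two_ln_le u : 0 < u -> 2 * ln u <= u.
Proof.
  intros hu. rewrite <- (ln_exp u) at 2.
  replace (2 * ln u) with (ln (u * u)) by (rewrite ln_mult; lra).
  apply ln_le; [nra | apply sqr_le_exp; lra].
Qed.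

Lemma ln_nonneg x : 1 <= x -> 0 <= ln x.
Proof. intros hx. rewrite <- ln_1. apply ln_le; lra. Qed.

Lemma opp_ln_pos x : 0 < x -> x < 1 -> 0 < - ln x.
Proof.
  intros hx0 hx1. assert (ln x < ln 1) by (apply ln_increasing; lra).
  rewrite ln_1 in *. lra.
Qed.

Lemma opp_mult_ln_le_sqrt y : 0 < y <= 1 -> - (y * ln y) <= 2 * sqrt y.
Proof.
  intros hy.
  set (w := sqrt y).
  assert (hw : 0 < w) by (apply sqrt_lt_R0; lra).
  assert (hww : w * w = y) by (apply sqrt_sqrt; lra).
  assert (hln : ln y = - 2 * ln (/ w)) by (rewrite <- hww, ln_mult, ln_Rinv; lra).
  assert (hlw : ln (/ w) < / w) by (apply ln_lt_id, Rinv_0_lt_compat, hw).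
  rewrite hln, <- hww.
  assert (hww' : w * w * / w = w) by (field; lra).
  nra.
Qed.

Lemma mult_ln_continuous_0 : continuous (fun y => y * ln y) 0.
Proof.
  apply continuity_pt_filterlim. intros eps heps.
  exists (Rmin 1 (eps * eps / 4)). split.
  { apply Rmin_pos; nra. }
  intros y [_ hy]. simpl in *. unfold R_dist in *.
  rewrite Rmult_0_l, Rminus_0_r in *.
  destruct (Rle_lt_dec y 0) as [hle | hpos].
  (* Stdlib's [ln] is [0] on nonpositive reals. *)
  { unfold ln. destruct (Rlt_dec 0 y) as [h | h]; [exfalso; lra |].
    rewrite Rmult_0_r, Rabs_R0. lra. }
  rewrite Rabs_pos_eq in hy by lra.
  assert (hy1 : y <= 1) by (pose proof (Rmin_l 1 (eps * eps / 4)); lra).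
  assert (hsq : sqrt y < eps / 2).
  { rewrite <- (sqrt_square (eps / 2)) by lra. apply sqrt_lt_1; [lra | nra |].
    pose proof (Rmin_r 1 (eps * eps / 4)); nra. }
  assert (hneg : y * ln y <= 0).
  { assert (ln y <= ln 1) by (apply ln_le; lra). rewrite ln_1 in *. nra. }
  pose proof (opp_mult_ln_le_sqrt y (conj hpos hy1)).
  rewrite Rabs_left1 by lra. lra.
Qed.

Lemma mult_ln_continuous y : 0 <= y -> continuous (fun y => y * ln y) y.
Proof.
  intros [hy | <-]; [| exact mult_ln_continuous_0].
  apply (ex_derive_continuous (fun y => y * ln y)). auto_derive. exact hy.
Qed.

Lemma integrand_continuous t a x : 0 < a -> 0 <= x -> continuous (integrand t a) x.
Proof.
  intros ha hx.
  apply (continuous_ext (fun x => exp (- t / a * ((a * x) * ln (a * x))))).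
  { intros y. unfold integrand. f_equal. field. lra. }
  apply (continuous_comp (fun x => - t / a * ((a * x) * ln (a * x))) exp).
  - apply (continuous_scal_r (- t / a) (fun x => (a * x) * ln (a * x))).
    apply (continuous_comp (fun x => a * x) (fun y => y * ln y)).
    + apply (ex_derive_continuous (fun x => a * x)). auto_derive. exact I.
    + apply mult_ln_continuous. nra.
  - apply (ex_derive_continuous exp). auto_derive. exact I.
Qed.

Lemma ex_RInt_integrand t a p q : 0 < a -> 0 <= p <= q -> ex_RInt (integrand t a) p q.
Proof.
  intros ha hpq. apply (ex_RInt_continuous (V := R_CompleteNormedModule)).
  intros x hx. rewrite Rmin_left in hx by lra. apply integrand_continuous; lra.
Qed.

Lemma is_RInt_exp_lin k p q : k <> 0 ->
  is_RInt (fun x => exp (- k * x)) p q ((exp (- k * p) - exp (- k * q)) / k).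
Proof.
  intros hk.
  replace ((exp (- k * p) - exp (- k * q)) / k)
    with (minus (- exp (- k * q) / k) (- exp (- k * p) / k))
    by (unfold minus, plus, opp; simpl; field; exact hk).
  apply (is_RInt_derive (fun x => - exp (- k * x) / k)).
  - intros x _. auto_derive; [exact I | field; exact hk].
  - intros x _. apply (ex_derive_continuous (fun x => exp (- k * x))).
    auto_derive. exact I.
Qed.

Lemma RInt_integrand_ge a s L p q : 0 < a -> 0 <= s -> 0 < p <= q ->
  - L <= ln (a * p) -> s * L <> 0 ->
  (exp (- (s * L) * p) - exp (- (s * L) * q)) / (s * L) <= RInt (integrand (- s) a) p q.
Proof.
  intros ha hs hpq hL hk.
  rewrite <- (is_RInt_unique _ _ _ _ (is_RInt_exp_lin _ p q hk)).
  apply RInt_le; [lra | eexists; apply is_RInt_exp_lin, hk | apply ex_RInt_integrand; lra |].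
  intros x hx. unfold integrand. apply exp_le_compat.
  assert (ln (a * p) <= ln (a * x)) by (apply ln_le; nra).
  assert (0 <= s * x) by nra.
  nra.
Qed.

Lemma RInt_integrand_le a s L p q : 0 < a -> 0 <= s -> 0 <= p <= q ->
  ln (a * q) <= - L -> s * L <> 0 ->
  RInt (integrand (- s) a) p q <= (exp (- (s * L) * p) - exp (- (s * L) * q)) / (s * L).
Proof.
  intros ha hs hpq hL hk.
  rewrite <- (is_RInt_unique _ _ _ _ (is_RInt_exp_lin _ p q hk)).
  apply RInt_le; [lra | apply ex_RInt_integrand; lra | eexists; apply is_RInt_exp_lin, hk |].
  intros x hx. unfold integrand. apply exp_le_compat.
  assert (ln (a * x) <= ln (a * q)) by (apply ln_le; nra).
  assert (0 <= s * x) by nra.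
  nra.
Qed.

Lemma is_lim_mult_finite f g x (lf lg : R) : is_lim f x lf -> is_lim g x lg ->
  is_lim (fun y => f y * g y) x (lf * lg).
Proof. intros hf hg. exact (is_lim_mult f g x lf lg hf hg I). Qed.

Lemma is_lim_div_finite f g x (lf lg : R) : is_lim f x lf -> is_lim g x lg -> lg <> 0 ->
  is_lim (fun y => f y / g y) x (lf / lg).
Proof.
  intros hf hg hlg. apply (is_lim_div f g x lf lg hf hg); [congruence | exact I].
Qed.

Lemma is_lim_inv_p_infty : is_lim (fun u => / u) p_infty 0.
Proof. exact (is_lim_inv (fun u => u) p_infty p_infty (is_lim_id _) ltac:(discriminate)). Qed.

Lemma is_lim_ln_shift_div k : is_lim (fun u => ln (u + k) / u) p_infty 0.
Proof.
  apply (is_lim_ext_loc (fun u => ln (u + k) / (u + k) * (1 + k * / u))).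
  { exists (Rabs k). intros u hu.
    pose proof (Rle_abs (- k)). pose proof (Rabs_pos k). rewrite Rabs_Ropp in *.
    field; split; lra. }
  replace 0 with (0 * (1 + k * 0)) by ring.
  apply is_lim_mult_finite.
  - apply (is_lim_comp (fun y => ln y / y) (fun u => u + k) p_infty 0 p_infty).
    + exact is_lim_div_ln_p.
    + exact (is_lim_plus (fun u => u) (fun _ => k) p_infty p_infty k p_infty
               (is_lim_id _) (is_lim_const k _) eq_refl).
    + exists 0. discriminate.
  - apply is_lim_plus'; [apply is_lim_const |].
    apply is_lim_mult_finite; [apply is_lim_const | exact is_lim_inv_p_infty].
Qed.

Lemma is_lim_affine_ln_div A B k : is_lim (fun u => (u + A + B * ln (u + k)) / u) p_infty 1.
Proof.
  apply (is_lim_ext_loc (fun u => 1 + A * / u + B * (ln (u + k) / u))).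
  { exists 0. intros u hu. field. lra. }
  replace (Finite 1) with (Finite (1 + A * 0 + B * 0)) by (f_equal; ring).
  apply is_lim_plus'; [apply is_lim_plus'; [apply is_lim_const |] |];
    apply is_lim_mult_finite; try apply is_lim_const.
  - exact is_lim_inv_p_infty.
  - apply is_lim_ln_shift_div.
Qed.

Section Rates.

Variable c : R.

Definition lower_rate u := c + u + 2 * ln u.
Definition upper_rate u := c + u - 2 * ln u.
Definition gta_denom u := u + c + ln (u + c - 1).

Definition lower_bound u :=
  (gta_denom u / u) / (lower_rate u / u) * (1 - lower_rate u / u / u - / u).
Definition upper_bound u :=
  (gta_denom u / u) / (upper_rate u / u) + gta_denom u / u * (/ (c * c) * / u).

Lemma lower_rate_ge u : 0 <= c -> 1 <= u -> u <= lower_rate u.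
Proof. intros hc hu. pose proof (ln_nonneg u hu). unfold lower_rate. lra. Qed.

Lemma upper_rate_ge u : 0 < u -> c <= upper_rate u.
Proof. intros hu. pose proof (two_ln_le u hu). unfold upper_rate. lra. Qed.

Lemma gta_denom_ge u : 0 <= c -> 2 <= u -> u <= gta_denom u.
Proof.
  intros hc hu. assert (0 <= ln (u + c - 1)) by (apply ln_nonneg; lra).
  unfold gta_denom. lra.
Qed.

Lemma is_lim_gta_denom_div : is_lim (fun u => gta_denom u / u) p_infty 1.
Proof.
  apply (is_lim_ext (fun u => (u + c + 1 * ln (u + (c - 1))) / u)).
  { intros u. unfold gta_denom. rewrite Rmult_1_l.
    replace (u + (c - 1)) with (u + c - 1) by ring. reflexivity. }
  apply is_lim_affine_ln_div.
Qed.

Lemma is_lim_lower_rate_div : is_lim (fun u => lower_rate u / u) p_infty 1.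
Proof.
  apply (is_lim_ext (fun u => (u + c + 2 * ln (u + 0)) / u)).
  { intros u. unfold lower_rate. rewrite Rplus_0_r. f_equal. ring. }
  apply is_lim_affine_ln_div.
Qed.

Lemma is_lim_upper_rate_div : is_lim (fun u => upper_rate u / u) p_infty 1.
Proof.
  apply (is_lim_ext (fun u => (u + c + - 2 * ln (u + 0)) / u)).
  { intros u. unfold upper_rate. rewrite Rplus_0_r. f_equal. ring. }
  apply is_lim_affine_ln_div.
Qed.

Lemma is_lim_lower_bound : is_lim lower_bound p_infty 1.
Proof.
  replace (Finite 1) with (Finite (1 / 1 * (1 - 1 * 0 - 0))) by (f_equal; field).
  apply is_lim_mult_finite.
  - apply is_lim_div_finite; [exact is_lim_gta_denom_div | exact is_lim_lower_rate_div | lra].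
  - apply is_lim_minus'; [apply is_lim_minus'; [apply is_lim_const |] | exact is_lim_inv_p_infty].
    apply is_lim_mult_finite; [exact is_lim_lower_rate_div | exact is_lim_inv_p_infty].
Qed.

Lemma is_lim_upper_bound : is_lim upper_bound p_infty 1.
Proof.
  replace (Finite 1) with (Finite (1 / 1 + 1 * (/ (c * c) * 0)))
    by (f_equal; rewrite Rmult_0_r; field).
  apply is_lim_plus'.
  - apply is_lim_div_finite; [exact is_lim_gta_denom_div | exact is_lim_upper_rate_div | lra].
  - apply is_lim_mult_finite; [exact is_lim_gta_denom_div |].
    apply is_lim_mult_finite; [apply is_lim_const | exact is_lim_inv_p_infty].
Qed.

End Rates.

Section Estimates.

Variables a s u : R.
Hypotheses (ha0 : 0 < a) (ha1 : a < 1) (hs : 0 < s) (hsu : ln s = u) (hu : 2 <= u).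
Let c := - ln a.
Let I := RInt (integrand (- s) a) 0 1.

Lemma sqr_ln_le : u * u <= s.
Proof. rewrite <- (exp_ln s hs), hsu. apply sqr_le_exp. lra. Qed.

Lemma RInt_split m : 0 <= m <= 1 ->
  I = RInt (integrand (- s) a) 0 m + RInt (integrand (- s) a) m 1.
Proof.
  intros hm. symmetry.
  apply (RInt_Chasles (V := R_CompleteNormedModule)); apply ex_RInt_integrand; lra.
Qed.

Lemma scaled_integral_ge :
  (1 - lower_rate c u / u / u - / u) / lower_rate c u <= s * I.
Proof.
  assert (hc : 0 < c) by exact (opp_ln_pos a ha0 ha1). pose proof sqr_ln_le.
  set (L := lower_rate c u).
  assert (hL : u <= L) by (apply lower_rate_ge; lra).
  assert (huu : 4 <= u * u) by nra.
  assert (hsuu : 1 <= s * (u * u)) by nra.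
  set (eta := / (s * (u * u))).
  assert (heta : 0 < eta <= 1).
  { unfold eta. split; [apply Rinv_0_lt_compat; lra |].
    rewrite <- Rinv_1. apply Rinv_le_contravar; lra. }
  assert (hln : ln (a * eta) = - L).
  { unfold eta.
    rewrite ln_mult, ln_Rinv, !ln_mult, hsu by (try apply Rinv_0_lt_compat; nra).
    unfold L, lower_rate, c. ring. }
  assert (hk : s * L <> 0) by nra.
  assert (hhead : 0 <= RInt (integrand (- s) a) 0 eta).
  { apply RInt_ge_0; [lra | apply ex_RInt_integrand; lra |].
    intros x _. left. apply exp_pos. }
  pose proof (RInt_integrand_ge a s L eta 1 ha0 ltac:(lra) ltac:(lra) ltac:(lra) hk) as htail.
  rewrite (RInt_split eta) by lra. fold I.
  replace (- (s * L) * eta) with (- (L / u / u)) in htail by (unfold eta; field; nra).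
  pose proof (exp_ineq1_le (- (L / u / u))).
  assert (hfar : exp (- (s * L) * 1) <= / u).
  { rewrite Rmult_1_r. eapply Rle_trans; [apply exp_opp_le_inv; nra |].
    apply Rinv_le_contravar; nra. }
  apply Rle_trans with ((exp (- (L / u / u)) - exp (- (s * L) * 1)) / L).
  { apply Rmult_le_compat_r; [left; apply Rinv_0_lt_compat |]; lra. }
  replace ((exp (- (L / u / u)) - exp (- (s * L) * 1)) / L)
    with (s * ((exp (- (L / u / u)) - exp (- (s * L) * 1)) / (s * L))) by (field; lra).
  apply Rmult_le_compat_l; lra.
Qed.

Lemma scaled_integral_le : s * I <= / upper_rate c u + / (c * c * (u * u)).
Proof.
  assert (hc : 0 < c) by exact (opp_ln_pos a ha0 ha1). pose proof sqr_ln_le.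
  set (L := upper_rate c u).
  assert (hL : c <= L) by (apply upper_rate_ge; lra).
  assert (huu : 0 < c * (u * u)) by (apply Rmult_lt_0_compat; nra).
  set (delta := u * u / s).
  assert (hdelta : 0 < delta <= 1).
  { unfold delta. split; [apply Rdiv_lt_0_compat; nra |].
    apply Rmult_le_reg_r with s; [lra |]. field_simplify; lra. }
  assert (hln : ln (a * delta) = - L).
  { unfold delta, Rdiv. assert (0 < / s) by (apply Rinv_0_lt_compat; lra).
    rewrite ln_mult, !ln_mult, ln_Rinv, hsu by (try apply Rmult_lt_0_compat; nra).
    unfold L, upper_rate, c. ring. }
  assert (hk : s * L <> 0) by nra.
  assert (hkc : s * c <> 0) by nra.
  pose proof (RInt_integrand_le a s L 0 delta ha0 ltac:(lra) ltac:(lra) ltac:(lra) hk)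
    as hhead.
  pose proof (RInt_integrand_le a s c delta 1 ha0 ltac:(lra) ltac:(lra)
    ltac:(rewrite Rmult_1_r; unfold c; lra) hkc) as htail.
  rewrite (RInt_split delta) by lra.
  rewrite Rmult_0_r, exp_0 in hhead.
  replace (- (s * c) * delta) with (- (c * (u * u))) in htail by (unfold delta; field; lra).
  assert (hnear : exp (- (c * (u * u))) <= / (c * (u * u))) by (apply exp_opp_le_inv, huu).
  pose proof (exp_pos (- (s * L) * delta)). pose proof (exp_pos (- (s * c) * 1)).
  replace (/ L + / (c * c * (u * u))) with (s * (1 / (s * L) + / (c * (u * u)) / (s * c)))
    by (field; repeat split; nra).
  apply Rmult_le_compat_l; [lra |].
  apply Rplus_le_compat.
  - eapply Rle_trans; [exact hhead |].
    apply Rmult_le_compat_r; [left; apply Rinv_0_lt_compat; nra | lra].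
  - eapply Rle_trans; [exact htail |].
    apply Rmult_le_compat_r; [left; apply Rinv_0_lt_compat; nra | lra].
Qed.

End Estimates.

Lemma fta_div_gta a t : 0 < a -> t < 0 -> gta_denom (- ln a) (ln (- t)) <> 0 ->
  fta t a / gta t a = - t * RInt (integrand t a) 0 1 * gta_denom (- ln a) (ln (- t)).
Proof.
  intros ha ht hM.
  assert (hln : ln (- t / a) = ln (- t) + - ln a).
  { unfold Rdiv. rewrite ln_mult, ln_Rinv; try apply Rinv_0_lt_compat; lra. }
  unfold fta, gta. rewrite hln. unfold gta_denom in *.
  change (fun x => integrand t a x) with (integrand t a).
  field. exact hM.
Qed.

Lemma fta_div_gta_bounds a t : 0 < a -> a < 1 -> t < 0 -> 2 <= ln (- t) ->
  lower_bound (- ln a) (ln (- t)) <= fta t a / gta t a <= upper_bound (- ln a) (ln (- t)).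
Proof.
  intros ha0 ha1 ht hu.
  pose proof (opp_ln_pos a ha0 ha1).
  assert (hM : 0 < gta_denom (- ln a) (ln (- t))).
  { eapply Rlt_le_trans; [| apply gta_denom_ge]; lra. }
  rewrite (fta_div_gta a t) by lra.
  set (c := - ln a) in *. set (s := - t) in *. set (u := ln s) in *.
  replace t with (- s) by (unfold s; ring).
  pose proof (scaled_integral_ge a s u ha0 ha1 ltac:(unfold s; lra) eq_refl hu) as hlower.
  pose proof (scaled_integral_le a s u ha0 ha1 ltac:(unfold s; lra) eq_refl hu) as hupper.
  fold c in hlower, hupper.
  assert (hL : u <= lower_rate c u) by (apply lower_rate_ge; lra).
  assert (hL2 : c <= upper_rate c u) by (apply upper_rate_ge; lra).
  split.
  - replace (lower_bound c u)
      with ((1 - lower_rate c u / u / u - / u) / lower_rate c u * gta_denom c u)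
      by (unfold lower_bound; field; split; lra).
    apply Rmult_le_compat_r; lra.
  - replace (upper_bound c u)
      with ((/ upper_rate c u + / (c * c * (u * u))) * gta_denom c u)
      by (unfold upper_bound; field; repeat split; lra).
    apply Rmult_le_compat_r; lra.
Qed.

Lemma is_lim_ln_opp_m_infty : is_lim (fun t => ln (- t)) m_infty p_infty.
Proof.
  apply (is_lim_comp ln (fun t => - t) m_infty p_infty p_infty).
  - exact is_lim_ln_p.
  - exact (is_lim_opp (fun t => t) m_infty m_infty (is_lim_id _)).
  - exists 0. discriminate.
Qed.

Theorem mainTheorem7 (a : R) (ha0 : 0 < a) (ha1 : a < 1) :
  is_lim (fun t => fta t a / gta t a) m_infty 1.
Proof.
  apply (is_lim_le_le_loc (fun t => lower_bound (- ln a) (ln (- t)))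
                          (fun t => upper_bound (- ln a) (ln (- t)))).
  - exists (- exp 2). intros t ht.
    assert (h2 : 2 < ln (- t)).
    { rewrite <- (ln_exp 2). apply ln_increasing; [apply exp_pos | lra]. }
    apply fta_div_gta_bounds; [exact ha0 | exact ha1 | pose proof (exp_pos 2); lra | lra].
  - apply (is_lim_comp (lower_bound (- ln a)) (fun t => ln (- t)) m_infty 1 p_infty).
    + apply is_lim_lower_bound.
    + exact is_lim_ln_opp_m_infty.
    + exists 0. discriminate.
  - apply (is_lim_comp (upper_bound (- ln a)) (fun t => ln (- t)) m_infty 1 p_infty).
    + apply is_lim_upper_bound.
    + exact is_lim_ln_opp_m_infty.
    + exists 0. discriminate.
Qed.
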